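(* For all $n\ge1$, $|\mathcal S_n[3]|=|\mathcal S'_n[3]|=3\cdot2^{2n+1}$.
   Context: Let $\tau=(1+\sqrt5)/2$, $\tau'=(1-\sqrt5)/2$. Let $\mathbb F_4=\mathbb{Z}[\tau]/2\mathbb{Z}[\tau]$ and for $y\in\mathbb{Z}[\tau]^3$ let $\bar y\in\mathbb F_4^3$ be the coordinatewise reduction. For $n\ge1$, $\mathcal S_n[3]=\{x\in2^{-n}\mathbb{Z}[\tau]^3: x\cdot x=1,\ \overline{2^nx}\in\{(\bar1,\bar{\tau'},\bar\tau),(\bar{\tau'},\bar\tau,\bar1),(\bar\tau,\bar1,\bar{\tau'})\}\}$ and $\mathcal S'_n[3]$ is defined in the same way with $\bar\tau$ and $\bar{\tau'}$ interchanged. *)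

From HB Require Import structures.
From mathcomp Require Import all_boot all_order all_algebra.
Set Implicit Arguments. Unset Strict Implicit. Unset Printing Implicit Defensive.
Import Order.TTheory GRing.Theory Num.Theory.
Local Open Scope ring_scope.

(* Q(tau) = Q(sqrt 5), an element (a, b) represents a + b*tau, tau^2 = tau + 1. *)
Definition Qtau := (rat * rat)%type.

Definition qt_add (x y : Qtau) : Qtau := (x.1 + y.1, x.2 + y.2).
(* (a + b tau)(c + d tau) = (ac + bd) + (ad + bc + bd) tau *)
Definition qt_mul (x y : Qtau) : Qtau :=
  (x.1 * y.1 + x.2 * y.2, x.1 * y.2 + x.2 * y.1 + x.2 * y.2).
Definition qt_scale (q : rat) (x : Qtau) : Qtau := (q * x.1, q * x.2).
Definition qt_one : Qtau := (1, 0).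

Definition in_Ztau (x : Qtau) : bool := (x.1 \is a Num.int) && (x.2 \is a Num.int).

(* F_4 = Z[tau]/2Z[tau]; an element (b0, b1) represents b0 + b1*tau mod 2. *)
Definition F4 := (bool * bool)%type.
Definition f4_one : F4 := (true, false).
Definition f4_tau : F4 := (false, true).
Definition f4_tau' : F4 := (true, true).   (* tau' = 1 - tau = 1 + tau mod 2 *)

(* reduction mod 2 of an element of Z[tau] (meaningful when in_Ztau x) *)
Definition red (x : Qtau) : F4 := (odd `|numq x.1|%N, odd `|numq x.2|%N).

Definition vec3 := (Qtau * Qtau * Qtau)%type.
Definition v_scale (q : rat) (x : vec3) : vec3 :=
  (qt_scale q x.1.1, qt_scale q x.1.2, qt_scale q x.2).
Definition v_dot (x y : vec3) : Qtau :=
  qt_add (qt_add (qt_mul x.1.1 y.1.1) (qt_mul x.1.2 y.1.2)) (qt_mul x.2 y.2).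
Definition v_inZ (x : vec3) : bool :=
  [&& in_Ztau x.1.1, in_Ztau x.1.2 & in_Ztau x.2].
Definition v_red (x : vec3) : F4 * F4 * F4 := (red x.1.1, red x.1.2, red x.2).

(* x in 2^{-n} Z[tau]^3 <-> 2^n x in Z[tau]^3 *)
Definition S3 (n : nat) (x : vec3) : Prop :=
  v_inZ (v_scale (2 ^+ n) x) /\ v_dot x x = qt_one /\
  v_red (v_scale (2 ^+ n) x) \in
    [:: (f4_one, f4_tau', f4_tau); (f4_tau', f4_tau, f4_one); (f4_tau, f4_one, f4_tau')].

Definition S3' (n : nat) (x : vec3) : Prop :=
  v_inZ (v_scale (2 ^+ n) x) /\ v_dot x x = qt_one /\
  v_red (v_scale (2 ^+ n) x) \in
    [:: (f4_one, f4_tau, f4_tau'); (f4_tau, f4_tau', f4_one); (f4_tau', f4_one, f4_tau)].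

Definition has_card (T : eqType) (P : T -> Prop) (k : nat) : Prop :=
  exists s : seq T, [/\ uniq s, (forall x, x \in s <-> P x) & size s = k].

(* Clearing denominators, S_n[3] is the set of y in Z[tau]^3 with y.y = 4^n whose
   residue mod 2 lies in a fixed class of three isotropic vectors of F4^3, namely
   the nonzero multiples of the residue b of a vector w1 of norm 4 (with
   w1 = (1, tau', tau) for S_n[3] and w1 = (1, tau, tau') for S'_n[3]).
   For w of norm 4 the map z |-> 2z - (z.w) w is twice the reflection in w and
   multiplies norms by 4.  Over the four vectors w = w1 + 2d of norm 4 with
   residue b, whose offsets d have pairings b.d running once through F4, this
   map is a bijection from the pairs (z, w) with z.z = m and z.w1 not in
   2 Z[tau] onto the y with y.y = 4m in the class of b.  When 4 divides z.z,
   "z.w1 not in 2 Z[tau]" is in turn equivalent to the residue of z lying in the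
   class of the other configuration: the only other candidates, residues
   (0, a, a) up to order with a != 0, are ruled out mod 4.  So the two counts
   are multiplied by 4 at each step, starting from the 6 unit vectors, which
   gives 6 * 4^n = 3 * 2^(2n+1). *)

From HB Require Import structures.
From mathcomp Require Import all_boot all_order all_algebra zify ring.
Set Implicit Arguments. Unset Strict Implicit. Unset Printing Implicit Defensive.
Import Order.TTheory GRing.Theory Num.Theory.
Local Open Scope ring_scope.

Lemma has_card_ext (A : eqType) (P Q : A -> Prop) k :
  (forall x, P x <-> Q x) -> has_card P k -> has_card Q k.
Proof. by move=> PQ [s [us Ps <-]]; exists s; split=> // x; rewrite Ps. Qed.

Lemma has_card_image (A B : eqType) (P : A -> Prop) (Q : B -> Prop) (f : A -> B) k :
  injective f -> (forall y, Q y <-> exists2 x, P x & y = f x) ->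
  has_card P k -> has_card Q k.
Proof.
move=> finj Qf [s [us Ps <-]]; exists [seq f x | x <- s]; split.
- by rewrite map_inj_uniq.
- move=> y; rewrite Qf; split=> [/mapP[x /Ps Px ->]|[x /Ps sx ->]]; last exact: map_f.
  by exists x.
- by rewrite size_map.
Qed.

Lemma has_card_allpairs (A B C : eqType) (P : A -> Prop) (Q : C -> Prop)
    (s : seq B) (f : A -> B -> C) k :
  uniq s ->
  (forall x x' u u', P x -> P x' -> u \in s -> u' \in s ->
     f x u = f x' u' -> x = x' /\ u = u') ->
  (forall y, Q y <-> exists x, exists2 u, u \in s & P x /\ y = f x u) ->
  has_card P k -> has_card Q (k * size s).
Proof.
move=> us finj Qf [l [ul Pl <-]]; exists [seq f x u | x <- l, u <- s]; split.
- apply: allpairs_uniq => // -[x u] [x' u'] /allpairsP[[x1 u1] /= [hx hu [-> ->]]].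
  move=> /allpairsP[[x2 u2] /= [hx' hu' [-> ->]]] /= e.
  by case: (finj _ _ _ _ ((Pl _).1 hx) ((Pl _).1 hx') hu hu' e) => -> ->.
- move=> y; rewrite Qf; split.
    by case/allpairsP=> -[x u] /= [/Pl Px su ->]; exists x, u.
  by case=> x [u su [/Pl lx ->]]; apply/allpairsP; exists (x, u).
- by rewrite size_allpairs.
Qed.

Definition dot3 (R : comNzRingType) (x y : R * R * R) : R :=
  x.1.1 * y.1.1 + x.1.2 * y.1.2 + x.2 * y.2.
Definition scale3 (R : comNzRingType) (c : R) (x : R * R * R) : R * R * R :=
  (c * x.1.1, c * x.1.2, c * x.2).
(* For [dot3 w w = 4], twice the reflection [x |-> x - (x.w) w / 2] in [w]. *)
Definition refl2 (R : comNzRingType) (w x : R * R * R) : R * R * R :=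
  scale3 2 x - scale3 (dot3 x w) w.

Lemma triple_add (V : zmodType) (a b c d e f : V) :
  (a, b, c) + (d, e, f) = (a + d, b + e, c + f).
Proof. by []. Qed.
Lemma triple_opp (V : zmodType) (a b c : V) : - (a, b, c) = (- a, - b, - c).
Proof. by []. Qed.
Lemma triple_eq0 (V : zmodType) (a b c : V) :
  (a, b, c) = 0 -> [/\ a = 0, b = 0 & c = 0].
Proof. by case. Qed.

Ltac triple_ring :=
  repeat match goal with x : (_ * _ * _)%type |- _ => case: x => [[? ?] ?] end;
  rewrite ?/refl2 ?/scale3 /= ?(triple_opp, triple_add) ?/dot3 /=;
  repeat match goal with |- (_, _) = (_, _) => congr (_, _) end; ring.

Section Triples.
Variable R : comNzRingType.
Implicit Types (c : R) (x y z w : R * R * R).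

Lemma dot30 x : dot3 0 x = 0. Proof. by rewrite /dot3 !mul0r !addr0. Qed.
Lemma dot3Dr x y z : dot3 x (y + z) = dot3 x y + dot3 x z. Proof. triple_ring. Qed.
Lemma dot3Bl x y z : dot3 (x - y) z = dot3 x z - dot3 y z. Proof. triple_ring. Qed.
Lemma dot3Zl c x y : dot3 (scale3 c x) y = c * dot3 x y. Proof. triple_ring. Qed.
Lemma dot3Zr c x y : dot3 x (scale3 c y) = c * dot3 x y. Proof. triple_ring. Qed.

Lemma scale3_0 x : scale3 0 x = 0. Proof. by rewrite /scale3 !mul0r. Qed.
Lemma scale3N c x : scale3 (- c) x = - scale3 c x. Proof. triple_ring. Qed.
Lemma scale3M c c' x : scale3 c (scale3 c' x) = scale3 (c * c') x. Proof. triple_ring. Qed.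

Lemma refl2_dot w x : dot3 w w = 4 -> dot3 (refl2 w x) w = - (2 * dot3 x w).
Proof.
have -> : dot3 (refl2 w x) w = 2 * dot3 x w - dot3 x w * dot3 w w by triple_ring.
by move->; ring.
Qed.

Lemma refl2_norm w x : dot3 w w = 4 -> dot3 (refl2 w x) (refl2 w x) = 4 * dot3 x x.
Proof.
have -> : dot3 (refl2 w x) (refl2 w x) =
  4 * dot3 x x + dot3 x w ^+ 2 * (dot3 w w - 4) by triple_ring.
by move->; rewrite subrr mulr0 addr0.
Qed.

Lemma refl2K w x : dot3 w w = 4 -> refl2 w (refl2 w x) = scale3 4 x.
Proof. by move=> ww; rewrite {1}/refl2 refl2_dot //; triple_ring. Qed.

End Triples.

Definition map3 (A B : Type) (f : A -> B) (x : A * A * A) : B * B * B :=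
  (f x.1.1, f x.1.2, f x.2).

Lemma map3_inj (A B : Type) (f : A -> B) : injective f -> injective (map3 f).
Proof. by move=> finj [[x1 x2] x3] [[y1 y2] y3] [/finj-> /finj-> /finj->]. Qed.

Section Map3.
Variables (R S : comNzRingType) (f : {rmorphism R -> S}).

Lemma rmorph_dot3 x y : f (dot3 x y) = dot3 (map3 f x) (map3 f y).
Proof. by rewrite /dot3 !rmorphD !rmorphM. Qed.
Lemma map3D x y : map3 f (x + y) = map3 f x + map3 f y.
Proof. by case: x y => [[? ?] ?] [[? ?] ?]; rewrite /map3 /= !rmorphD. Qed.
Lemma map3B x y : map3 f (x - y) = map3 f x - map3 f y.
Proof. by case: x y => [[? ?] ?] [[? ?] ?]; rewrite /map3 /= !rmorphB. Qed.
Lemma map3Z c x : map3 f (scale3 c x) = scale3 (f c) (map3 f x).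
Proof. by rewrite /map3 /scale3 /= !rmorphM. Qed.

End Map3.

(** * The ring Z[tau] and its residue field F4 *)

(* [ZTau a b] is a + b tau; the product uses tau ^ 2 = tau + 1. *)
Record Ztau := ZTau { zt0 : int; zt1 : int }.

Definition ztau_pair (x : Ztau) := (zt0 x, zt1 x).
Definition pair_ztau (p : int * int) := ZTau p.1 p.2.
Lemma ztau_pairK : cancel ztau_pair pair_ztau. Proof. by case. Qed.
HB.instance Definition _ := Countable.copy Ztau (can_type ztau_pairK).

Definition zt_add x y := ZTau (zt0 x + zt0 y) (zt1 x + zt1 y).
Definition zt_opp x := ZTau (- zt0 x) (- zt1 x).
Definition zt_mul x y := ZTau (zt0 x * zt0 y + zt1 x * zt1 y)
  (zt0 x * zt1 y + zt1 x * zt0 y + zt1 x * zt1 y).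

Ltac ztau_ring :=
  repeat case=> ? ?; rewrite /zt_add /zt_opp /zt_mul /=; congr ZTau; ring.

Lemma zt_addA : associative zt_add. Proof. ztau_ring. Qed.
Lemma zt_addC : commutative zt_add. Proof. ztau_ring. Qed.
Lemma zt_add0 : left_id (ZTau 0 0) zt_add. Proof. ztau_ring. Qed.
Lemma zt_addN : left_inverse (ZTau 0 0) zt_opp zt_add. Proof. ztau_ring. Qed.
HB.instance Definition _ := GRing.isZmodule.Build Ztau zt_addA zt_addC zt_add0 zt_addN.

Lemma zt_mulA : associative zt_mul. Proof. ztau_ring. Qed.
Lemma zt_mulC : commutative zt_mul. Proof. ztau_ring. Qed.
Lemma zt_mul1 : left_id (ZTau 1 0) zt_mul. Proof. ztau_ring. Qed.
Lemma zt_mulDl : left_distributive zt_mul zt_add. Proof. ztau_ring. Qed.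
Lemma zt_one_neq0 : ZTau 1 0 != 0. Proof. by []. Qed.
HB.instance Definition _ :=
  GRing.Zmodule_isComNzRing.Build Ztau zt_mulA zt_mulC zt_mul1 zt_mulDl zt_one_neq0.

Lemma ztauD a b c d : ZTau a b + ZTau c d = ZTau (a + c) (b + d). Proof. by []. Qed.
Lemma ztauM a b c d :
  ZTau a b * ZTau c d = ZTau (a * c + b * d) (a * d + b * c + b * d).
Proof. by []. Qed.

Lemma ztau_natE n : n%:R = ZTau n%:R 0 :> Ztau.
Proof. by elim: n => [|n IH] //; rewrite !mulrS IH. Qed.

Lemma ztau_exprn (a : int) n : ZTau a 0 ^+ n = ZTau (a ^+ n) 0.
Proof.
elim: n => [|n IH] //; rewrite !exprS IH ztauM.
by congr ZTau; rewrite ?mul0r ?mulr0 ?addr0.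
Qed.

Lemma mul2E (x : Ztau) : 2 * x = ZTau (2 * zt0 x) (2 * zt1 x).
Proof. by case: x => a b; rewrite !mulr_natl !mulr2n. Qed.

Lemma mul2I : injective (fun x : Ztau => 2 * x).
Proof. by move=> [a b] [c d]; rewrite /= !mul2E => -[? ?]; congr ZTau; lia. Qed.

Lemma mul4I : injective (fun x : Ztau => 4 * x).
Proof.
by move=> x y; rewrite /= -[4 : Ztau]/((2 * 2)%N%:R) natrM -!mulrA => /mul2I/mul2I.
Qed.

Definition f4_add (x y : F4) : F4 := (x.1 (+) y.1, x.2 (+) y.2).
Definition f4_mul (x y : F4) : F4 :=
  ((x.1 && y.1) (+) (x.2 && y.2), (x.1 && y.2) (+) (x.2 && y.1) (+) (x.2 && y.2)).
Definition f4_inv (x : F4) : F4 := (x.1 (+) x.2, x.2).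

Ltac f4_cases := repeat (let x := fresh in move=> x; case: x => [[] []]); try done.

Lemma f4_addA : associative f4_add. Proof. f4_cases. Qed.
Lemma f4_addC : commutative f4_add. Proof. f4_cases. Qed.
Lemma f4_add0 : left_id (false, false) f4_add. Proof. f4_cases. Qed.
Lemma f4_addK : left_inverse (false, false) id f4_add. Proof. f4_cases. Qed.
HB.instance Definition _ := Finite.on F4.
HB.instance Definition _ := GRing.isZmodule.Build F4 f4_addA f4_addC f4_add0 f4_addK.

Lemma f4_mulA : associative f4_mul. Proof. f4_cases. Qed.
Lemma f4_mulC : commutative f4_mul. Proof. f4_cases. Qed.
Lemma f4_mul1 : left_id f4_one f4_mul. Proof. f4_cases. Qed.
Lemma f4_mulDl : left_distributive f4_mul f4_add. Proof. f4_cases. Qed.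
Lemma f4_one_neq0 : f4_one != 0. Proof. by []. Qed.
HB.instance Definition _ :=
  GRing.Zmodule_isComNzRing.Build F4 f4_mulA f4_mulC f4_mul1 f4_mulDl f4_one_neq0.

Lemma f4_mulV : forall x : F4, x != 0 -> f4_inv x * x = 1.
Proof. by move=> x; case: x => [[] []]. Qed.
Lemma f4_inv0 : f4_inv 0 = 0. Proof. by []. Qed.
HB.instance Definition _ := GRing.ComNzRing_isField.Build F4 f4_mulV f4_inv0.

Notation Zt3 := (Ztau * Ztau * Ztau)%type.
Notation F43 := (F4 * F4 * F4)%type.

Lemma f4_mulE (x y : F4) : x * y = f4_mul x y. Proof. by []. Qed.
Lemma F4_opp (x : F4) : - x = x. Proof. by []. Qed.
Lemma F43_opp (v : F43) : - v = v. Proof. by case: v => [[]]. Qed.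
Lemma F4_char2 : 2 = 0 :> F4. Proof. by []. Qed.

Definition mod2 (x : Ztau) : F4 := (odd (absz (zt0 x)), odd (absz (zt1 x))).
(* Lets [/=] turn the rmorphism coercion back into [mod2] without unfolding it. *)
Arguments mod2 : simpl never.
Notation mod2v := (map3 mod2).

Lemma odd_absz_add (a b : int) : odd (absz (a + b)) = odd (absz a) (+) odd (absz b).
Proof. lia. Qed.
Lemma odd_absz_mul (a b : int) : odd (absz (a * b)) = odd (absz a) && odd (absz b).
Proof. by rewrite abszM oddM. Qed.

Lemma mod2_is_zmod_morphism : zmod_morphism mod2.
Proof. by move=> [a b] [c d]; rewrite /mod2 /= !odd_absz_add !abszN. Qed.
Lemma mod2_is_monoid_morphism : monoid_morphism mod2.
Proof.
split=> // -[a b] [c d].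
by rewrite /mod2 /= f4_mulE /f4_mul /= !odd_absz_add !odd_absz_mul.
Qed.
HB.instance Definition _ := GRing.isZmodMorphism.Build Ztau F4 mod2 mod2_is_zmod_morphism.
HB.instance Definition _ :=
  GRing.isMonoidMorphism.Build Ztau F4 mod2 mod2_is_monoid_morphism.

Lemma mod2_mul2 x : mod2 (2 * x) = 0.
Proof. by rewrite rmorphM rmorph_nat /= F4_char2 mul0r. Qed.

Lemma mod2_mul4 x : mod2 (4 * x) = 0.
Proof. by rewrite (_ : 4 * x = 2 * (2 * x)) ?mod2_mul2 //; ring. Qed.

Lemma mod2_eq0_mul2 x : mod2 x = 0 -> exists y, x = 2 * y.
Proof.
case: x => a b [ha hb]; exists (ZTau (a %/ 2)%Z (b %/ 2)%Z).
by rewrite mul2E /=; congr ZTau; lia.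
Qed.

Lemma scale3_2I : injective (@scale3 Ztau 2).
Proof. exact: map3_inj mul2I. Qed.

Lemma scale3_4I : injective (@scale3 Ztau 4).
Proof.
move=> x y; rewrite -[4 : Ztau]/((2 * 2)%N%:R) natrM -!scale3M.
by move/scale3_2I/scale3_2I.
Qed.

Lemma mod2v_eq0_scale2 x : mod2v x = 0 -> exists y, x = scale3 2 y.
Proof.
case: x => [[x1 x2] x3]; rewrite /map3 /= => /triple_eq0[].
by move=> /mod2_eq0_mul2[y1 ->] /mod2_eq0_mul2[y2 ->] /mod2_eq0_mul2[y3 ->]; exists (y1, y2, y3).
Qed.

(** * Lifting from norm m to norm 4m *)

Definition sphere_odd (w : Zt3) (m : Ztau) (z : Zt3) : Prop :=
  dot3 z z = m /\ mod2 (dot3 z w) != 0.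

Definition lifts (w1 : Zt3) (Ds : seq Zt3) : seq Zt3 :=
  [seq w1 + scale3 2 d | d <- Ds].

Section Lifting.
Variables (w1 : Zt3) (Ds : seq Zt3).
Let b := mod2v w1.
Let W := lifts w1 Ds.
Hypothesis lifts_norm : forall w, w \in W -> dot3 w w = 4.
Hypothesis b1_neq0 : b.1.1 != 0.
Hypothesis b_isotropic : dot3 b b = 0.
(* The pairings [b.d] run once through F4, so that for each y in the class of
   [b] exactly one lift [w] makes [scale3 2 y - (y.w) w] divisible by 4. *)
Hypothesis Ds_onto : forall t, exists2 d, d \in Ds & dot3 b (mod2v d) = t.
Hypothesis Ds_inj : {in Ds &, injective (fun d => dot3 b (mod2v d))}.
Hypothesis Ds_uniq : uniq Ds.

Lemma mod2v_lift d : mod2v (w1 + scale3 2 d) = b.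
Proof. by rewrite map3D map3Z rmorph_nat F4_char2 scale3_0 addr0. Qed.

Lemma mod2_dot3_lift z d : mod2 (dot3 z (w1 + scale3 2 d)) = mod2 (dot3 z w1).
Proof. by rewrite dot3Dr dot3Zr rmorphD rmorphM rmorph_nat F4_char2 mul0r addr0. Qed.

Lemma mod2v_refl2 z w : w \in W -> mod2v (refl2 w z) = scale3 (mod2 (dot3 z w1)) b.
Proof.
case/mapP=> d _ ->; rewrite /refl2 map3B !map3Z rmorph_nat F4_char2 scale3_0 sub0r.
by rewrite /= F43_opp mod2_dot3_lift mod2v_lift.
Qed.

Lemma dot3_w1_mul2 y l : mod2v y = scale3 l b -> exists h, dot3 y w1 = 2 * h.
Proof.
by move=> yb; apply: mod2_eq0_mul2; rewrite rmorph_dot3 yb dot3Zl b_isotropic mulr0.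
Qed.

Lemma refl2_lift_class z w m : sphere_odd w1 m z -> w \in W ->
  dot3 (refl2 w z) (refl2 w z) = 4 * m /\
  exists2 l, l != 0 & mod2v (refl2 w z) = scale3 l b.
Proof.
move=> [zz zw] hw; split; first by rewrite refl2_norm ?zz ?lifts_norm.
by exists (mod2 (dot3 z w1)); last exact: mod2v_refl2.
Qed.

Lemma refl2_lift_onto y m l : dot3 y y = 4 * m -> l != 0 -> mod2v y = scale3 l b ->
  exists z, exists2 w, w \in W & sphere_odd w1 m z /\ y = refl2 w z.
Proof.
move=> yy l0 yb; have [h yw1] := dot3_w1_mul2 yb.
have [d dDs bd] := Ds_onto ((l - mod2 h) / l).
pose w := w1 + scale3 2 d; pose k := h + dot3 y d.
have ww : dot3 w w = 4 by apply/lifts_norm/map_f.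
have yw : dot3 y w = 2 * k by rewrite /w /k dot3Dr dot3Zr yw1 -mulrDr.
have k_l : mod2 k = l.
  by rewrite rmorphD rmorph_dot3 /= yb dot3Zl bd [l * _]mulrC divfK // addrC subrK.
have [z yz] : exists z, y - scale3 k w = scale3 2 z.
  by apply: mod2v_eq0_scale2; rewrite map3B map3Z /= k_l (mod2v_lift d) yb subrr.
have zw : dot3 z w = - k.
  by apply: mul2I; rewrite /= -dot3Zl -yz dot3Bl dot3Zl yw ww; ring.
have y_refl2 : y = refl2 w z by rewrite /refl2 zw -yz scale3N opprK subrK.
exists z, w; first exact: map_f.
split=> //; split; first by apply: mul4I; rewrite /= -(refl2_norm z ww) -y_refl2.
by rewrite -(mod2_dot3_lift z d) zw rmorphN /= F4_opp k_l.
Qed.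

(* The lift used to reach [refl2 w z] can be read off from the vector itself. *)
Lemma lift_selector z d h : d \in Ds ->
  dot3 (refl2 (w1 + scale3 2 d) z) w1 = 2 * h ->
  mod2 h + mod2 (dot3 z w1) * dot3 b (mod2v d) = mod2 (dot3 z w1).
Proof.
move=> dDs yw1; have hw : w1 + scale3 2 d \in W by exact: map_f.
have : 2 * (h + dot3 (refl2 (w1 + scale3 2 d) z) d) = 2 * - dot3 z (w1 + scale3 2 d).
  by rewrite mulrDr -yw1 -dot3Zr -dot3Dr refl2_dot ?lifts_norm // mulrN.
move/mul2I/(congr1 mod2); rewrite rmorphD rmorphN /= F4_opp mod2_dot3_lift.
by rewrite rmorph_dot3 /= mod2v_refl2 // dot3Zl.
Qed.

Lemma refl2_lift_inj z z' w w' m m' : sphere_odd w1 m z -> sphere_odd w1 m' z' ->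
  w \in W -> w' \in W -> refl2 w z = refl2 w' z' -> z = z' /\ w = w'.
Proof.
move=> [_ l0] _ hw hw' e.
have ll : mod2 (dot3 z w1) = mod2 (dot3 z' w1).
  have := congr1 (fun v => v.1.1) (congr1 mod2v e).
  by rewrite !mod2v_refl2 //= => /(mulIf b1_neq0).
have [h yw1] := dot3_w1_mul2 (mod2v_refl2 z hw).
case/mapP: hw => d dDs ew; case/mapP: hw' => d' dDs' ew'; subst w w'.
have sel := lift_selector dDs yw1.
have sel' := lift_selector dDs' (etrans (congr1 (fun v => dot3 v w1) (esym e)) yw1).
have dd : d = d'.
  apply: Ds_inj => //; apply: (mulfI l0); apply: (addrI (mod2 h)).
  by rewrite sel ll sel'.
subst d'; split=> //; have ww := lifts_norm (map_f _ dDs).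
by apply: scale3_4I; rewrite -(refl2K z ww) -(refl2K z' ww) e.
Qed.

Lemma has_card_lifts m k : has_card (sphere_odd w1 m) k ->
  has_card (fun y => dot3 y y = 4 * m /\ exists2 l, l != 0 & mod2v y = scale3 l b)
           (k * size Ds).
Proof.
rewrite -(size_map (fun d => w1 + scale3 2 d)).
apply: (has_card_allpairs (f := fun z w => refl2 w z)).
- by rewrite map_inj_uniq // => d d' /addrI/scale3_2I.
- by move=> z z' w w' Pz Pz' hw hw'; exact: refl2_lift_inj Pz Pz' hw hw'.
- move=> y; split=> [[yy [l l0 yb]]|[z [w hw [Pz ->]]]]; last exact: refl2_lift_class.
  by have [z [w hw [Pz ->]]] := refl2_lift_onto yy l0 yb; exists z, w.
Qed.

End Lifting.

(** * Residue classes of vectors of norm divisible by 4 *)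

Definition twin (v : F43) : bool :=
  [|| (v.1.1 == 0) && (v.1.2 == v.2), (v.1.2 == 0) && (v.1.1 == v.2)
    | (v.2 == 0) && (v.1.1 == v.1.2)].

Lemma sum_sqr_mod4 a b c m : a * a + b * b + c * c = 4 * m ->
  mod2 a = mod2 b -> mod2 c = 0 -> mod2 a = 0.
Proof.
move=> s4 ab /mod2_eq0_mul2[c' c2]; have /mod2_eq0_mul2[e ae] : mod2 (a - b) = 0.
  by rewrite rmorphB /= ab subrr.
have : 2 * (b * b) = 2 * (2 * (m - b * e - e * e - c' * c')).
  rewrite -[a](subrK b) ae c2 in s4.
  have -> : 2 * (2 * (m - b * e - e * e - c' * c')) =
    4 * m - 4 * (b * e + e * e + c' * c') by ring.
  by rewrite -s4; ring.
move/mul2I/(congr1 mod2); rewrite mod2_mul2 rmorphM /= => /eqP.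
by rewrite ab mulf_eq0 orbb => /eqP.
Qed.

Lemma twin_mod4 z m : dot3 z z = 4 * m -> twin (mod2v z) -> mod2v z = 0.
Proof.
case: z => [[z1 z2] z3]; rewrite /twin /map3 /dot3 /= => zz.
case/or3P=> /andP[/eqP c0 /eqP ab].
- have := sum_sqr_mod4 (_ : z2 * z2 + z3 * z3 + z1 * z1 = 4 * m) ab c0.
  by rewrite -ab c0 => ->; last by rewrite -zz; ring.
- have := sum_sqr_mod4 (_ : z1 * z1 + z3 * z3 + z2 * z2 = 4 * m) ab c0.
  by rewrite -ab c0 => ->; last by rewrite -zz; ring.
- have := sum_sqr_mod4 (_ : z1 * z1 + z2 * z2 + z3 * z3 = 4 * m) ab c0.
  by rewrite -ab c0 => ->; last by rewrite -zz.
Qed.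

Lemma sphere_odd_class w (C : seq F43) z m :
  (forall v, dot3 v v = 0 -> ~~ twin v -> (dot3 v (mod2v w) != 0) = (v \in C)) ->
  0 \notin C -> dot3 z z = 4 * m -> (mod2 (dot3 z w) != 0) = (mod2v z \in C).
Proof.
move=> pairing C0 zz; rewrite rmorph_dot3 /=.
have [/(twin_mod4 zz) z0 | ntw] := boolP (twin (mod2v z)).
  by rewrite z0 (negbTE C0) dot30 eqxx.
by apply: pairing ntw; rewrite -rmorph_dot3 zz /= mod2_mul4.
Qed.

Definition tau : Ztau := ZTau 0 1.
Definition tau' : Ztau := ZTau 1 (-1).

Definition wA : Zt3 := (1, tau', tau).
Definition wB : Zt3 := (1, tau, tau').
Definition DsA : seq Zt3 := [:: 0; (0, - tau', 0); (0, 0, - tau); (0, - tau', - tau)].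
Definition DsB : seq Zt3 := [:: 0; (0, - tau, 0); (0, 0, - tau'); (0, - tau, - tau')].

Definition classA : seq F43 :=
  [:: (f4_one, f4_tau', f4_tau); (f4_tau', f4_tau, f4_one); (f4_tau, f4_one, f4_tau')].
Definition classB : seq F43 :=
  [:: (f4_one, f4_tau, f4_tau'); (f4_tau, f4_tau', f4_one); (f4_tau', f4_one, f4_tau)].

Lemma liftsA_norm w : w \in lifts wA DsA -> dot3 w w = 4.
Proof.
have /allP norms : all (fun w => dot3 w w == 4) (lifts wA DsA) by [].
by move/norms/eqP.
Qed.
Lemma liftsB_norm w : w \in lifts wB DsB -> dot3 w w = 4.
Proof.
have /allP norms : all (fun w => dot3 w w == 4) (lifts wB DsB) by [].
by move/norms/eqP.
Qed.

Lemma DsA_onto t : exists2 d, d \in DsA & dot3 (mod2v wA) (mod2v d) = t.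
Proof.
have /hasP[d dD /eqP] : has (fun d => dot3 (mod2v wA) (mod2v d) == t) DsA.
  by case: t => [[] []].
by exists d.
Qed.
Lemma DsB_onto t : exists2 d, d \in DsB & dot3 (mod2v wB) (mod2v d) = t.
Proof.
have /hasP[d dD /eqP] : has (fun d => dot3 (mod2v wB) (mod2v d) == t) DsB.
  by case: t => [[] []].
by exists d.
Qed.

Lemma DsA_inj : {in DsA &, injective (fun d => dot3 (mod2v wA) (mod2v d))}.
Proof. by move=> d d'; rewrite !inE => /or4P[] /eqP-> /or4P[] /eqP->. Qed.
Lemma DsB_inj : {in DsB &, injective (fun d => dot3 (mod2v wB) (mod2v d))}.
Proof. by move=> d d'; rewrite !inE => /or4P[] /eqP-> /or4P[] /eqP->. Qed.

Lemma mem_classA v : v \in classA <-> exists2 l, l != 0 & v = scale3 l (mod2v wA).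
Proof.
split=> [|[l l0 ->]]; last by case: l l0 => [[] []].
by rewrite !inE => /or3P[] /eqP->; [exists f4_one | exists f4_tau' | exists f4_tau].
Qed.
Lemma mem_classB v : v \in classB <-> exists2 l, l != 0 & v = scale3 l (mod2v wB).
Proof.
split=> [|[l l0 ->]]; last by case: l l0 => [[] []].
by rewrite !inE => /or3P[] /eqP->; [exists f4_one | exists f4_tau | exists f4_tau'].
Qed.

Lemma classA_pairing v :
  dot3 v v = 0 -> ~~ twin v -> (dot3 v (mod2v wB) != 0) = (v \in classA).
Proof. by move/eqP; case: v => [[[[] []] [[] []]] [[] []]]. Qed.
Lemma classB_pairing v :
  dot3 v v = 0 -> ~~ twin v -> (dot3 v (mod2v wA) != 0) = (v \in classB).
Proof. by move/eqP; case: v => [[[[] []] [[] []]] [[] []]]. Qed.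

Lemma sphere_oddA_lift m z : sphere_odd wA (4 * m) z <->
  dot3 z z = 4 * m /\ exists2 l, l != 0 & mod2v z = scale3 l (mod2v wB).
Proof.
rewrite /sphere_odd; split=> -[zz h]; split=> //.
  by apply/mem_classB; rewrite -(sphere_odd_class classB_pairing _ zz).
by rewrite (sphere_odd_class classB_pairing _ zz) //; apply/mem_classB.
Qed.

Lemma sphere_oddB_lift m z : sphere_odd wB (4 * m) z <->
  dot3 z z = 4 * m /\ exists2 l, l != 0 & mod2v z = scale3 l (mod2v wA).
Proof.
rewrite /sphere_odd; split=> -[zz h]; split=> //.
  by apply/mem_classA; rewrite -(sphere_odd_class classA_pairing _ zz).
by rewrite (sphere_odd_class classA_pairing _ zz) //; apply/mem_classA.
Qed.

(** * Counting the vectors of norm 4^n *)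

Definition unit_vectors : seq Zt3 :=
  [:: (1, 0, 0); (-1, 0, 0); (0, 1, 0); (0, -1, 0); (0, 0, 1); (0, 0, -1)].

Lemma dot3_eq1 z : dot3 z z = 1 -> z \in unit_vectors.
Proof.
case: z => [[[a1 b1] [a2 b2]] [a3 b3]]; rewrite /dot3 /= !ztauM !ztauD => -[n1 n2].
have [b10 [b20 b30]] : b1 = 0 /\ b2 = 0 /\ b3 = 0 by nia.
subst b1 b2 b3.
have : (a1 = 1 \/ a1 = -1) /\ a2 = 0 /\ a3 = 0 \/
       (a2 = 1 \/ a2 = -1) /\ a1 = 0 /\ a3 = 0 \/
       (a3 = 1 \/ a3 = -1) /\ a1 = 0 /\ a2 = 0 by nia.
by case=> [|[|]] [[]-> [-> ->]].
Qed.

Lemma has_card_sphere_odd1 w : all (fun e => mod2 (dot3 e w) != 0) unit_vectors ->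
  has_card (sphere_odd w 1) 6.
Proof.
move=> /allP odd_w; have /allP norms : all (fun e => dot3 e e == 1) unit_vectors by [].
exists unit_vectors; split=> // z; split=> [zE | [/dot3_eq1 //]].
by split; [apply/eqP/norms | apply: odd_w].
Qed.

Lemma has_card_sphere_odd n :
  has_card (sphere_odd wA (4 ^+ n)) (6 * 4 ^ n) /\
  has_card (sphere_odd wB (4 ^+ n)) (6 * 4 ^ n).
Proof.
elim: n => [|n [cardA cardB]]; first by split; apply: has_card_sphere_odd1.
have -> : (6 * 4 ^ n.+1 = 6 * 4 ^ n * 4)%N by rewrite expnS; lia.
rewrite exprS; split.
- apply: has_card_ext (has_card_lifts liftsB_norm _ _ DsB_onto DsB_inj _ cardB) => //.
  by move=> y; apply: iff_sym; apply: sphere_oddA_lift.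
- apply: has_card_ext (has_card_lifts liftsA_norm _ _ DsA_onto DsA_inj _ cardA) => //.
  by move=> y; apply: iff_sym; apply: sphere_oddB_lift.
Qed.

(** * Back to S_n[3] *)

Definition qt_of (x : Ztau) : Qtau := ((zt0 x)%:~R, (zt1 x)%:~R).
Notation vec3_of := (map3 qt_of).

Lemma qt_ofK : cancel qt_of (fun q => ZTau (numq q.1) (numq q.2)).
Proof. by case=> a b; rewrite /qt_of /= !numq_int. Qed.

Lemma vec3_of_inj : injective vec3_of.
Proof. exact/map3_inj/(can_inj qt_ofK). Qed.

Lemma qt_ofD x y : qt_of (x + y) = qt_add (qt_of x) (qt_of y).
Proof. by case: x y => [a b] [c d]; rewrite /qt_of /qt_add /= !rmorphD. Qed.
Lemma qt_ofM x y : qt_of (x * y) = qt_mul (qt_of x) (qt_of y).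
Proof. by case: x y => [a b] [c d]; rewrite /qt_of /qt_mul /= !rmorphD !rmorphM. Qed.

Lemma qt_of_pow4 n : qt_of (4 ^+ n) = qt_scale ((2 : rat) ^+ n * 2 ^+ n) qt_one.
Proof.
rewrite ztau_natE ztau_exprn /qt_of /qt_scale /qt_one /= mulr1 mulr0 -exprMn.
by rewrite rmorphXn.
Qed.

Lemma v_dot_vec3_of x y : v_dot (vec3_of x) (vec3_of y) = qt_of (dot3 x y).
Proof. by rewrite /v_dot /dot3 !qt_ofD !qt_ofM. Qed.
Lemma v_red_vec3_of y : v_red (vec3_of y) = mod2v y.
Proof. by case: y => [[[? ?] [? ?]] [? ?]]; rewrite /v_red /red /= !numq_int. Qed.
Lemma v_inZ_vec3_of y : v_inZ (vec3_of y).
Proof. by rewrite /v_inZ /in_Ztau /= !rpred_int. Qed.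
Lemma v_inZP u : v_inZ u -> exists y, u = vec3_of y.
Proof.
case: u => [[[a1 b1] [a2 b2]] [a3 b3]].
rewrite /v_inZ /in_Ztau /= => /and3P[/andP[/intrP[k1 ->] /intrP[l1 ->]]
  /andP[/intrP[k2 ->] /intrP[l2 ->]] /andP[/intrP[k3 ->] /intrP[l3 ->]]].
by exists (ZTau k1 l1, ZTau k2 l2, ZTau k3 l3).
Qed.

Lemma v_scaleM s t u : v_scale s (v_scale t u) = v_scale (s * t) u.
Proof. by rewrite /v_scale /qt_scale /= !mulrA. Qed.
Lemma v_scale1 u : v_scale 1 u = u.
Proof. by case: u => [[[? ?] [? ?]] [? ?]]; rewrite /v_scale /qt_scale /= !mul1r. Qed.
Lemma v_dot_scale s u : v_dot (v_scale s u) (v_scale s u) = qt_scale (s * s) (v_dot u u).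
Proof.
case: u => [[[a1 b1] [a2 b2]] [a3 b3]].
by rewrite /v_dot /v_scale /qt_scale /qt_add /qt_mul /=; congr (_, _); ring.
Qed.

Definition scaled_vec (n : nat) (y : Zt3) : vec3 := v_scale ((2 : rat) ^- n) (vec3_of y).

Lemma scaled_vec_inj n : injective (scaled_vec n).
Proof.
move=> y y' /(congr1 (v_scale (2 ^+ n))); rewrite !v_scaleM mulfV ?expf_neq0 //.
by rewrite !v_scale1 => /vec3_of_inj.
Qed.

Lemma scaled_vecP n (C : seq F43) x :
  (v_inZ (v_scale (2 ^+ n) x) /\ v_dot x x = qt_one /\ v_red (v_scale (2 ^+ n) x) \in C)
  <-> exists2 y, dot3 y y = 4 ^+ n /\ mod2v y \in C & x = scaled_vec n y.
Proof.
have two_n : (2 : rat) ^+ n != 0 by rewrite expf_neq0.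
split=> [[/v_inZP[y ey] [xx xC]] | [y [yy yC] ->]].
  have -> : x = scaled_vec n y by rewrite /scaled_vec -ey v_scaleM mulVf // v_scale1.
  exists y => //; split; last by rewrite -v_red_vec3_of -ey.
  by apply: (can_inj qt_ofK); rewrite -v_dot_vec3_of -ey v_dot_scale xx qt_of_pow4.
have -> : v_scale (2 ^+ n) (scaled_vec n y) = vec3_of y.
  by rewrite v_scaleM mulfV // v_scale1.
rewrite v_inZ_vec3_of v_red_vec3_of; split=> //; split=> //.
rewrite v_dot_scale v_dot_vec3_of yy qt_of_pow4 /qt_scale /qt_one /= mulr1 !mulr0.
by rewrite mulrACA mulVf // mulr1.
Qed.

Lemma S3_sphere_odd n x : S3 n.+1 x <->
  exists2 y, sphere_odd wB (4 ^+ n.+1) y & x = scaled_vec n.+1 y.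
Proof.
rewrite /S3 -/classA scaled_vecP exprS.
split=> -[y [yy yC] ->]; exists y => //.
  by apply/(sphere_oddB_lift _ _).2; split=> //; apply/mem_classA.
by have [? /mem_classA] := (sphere_oddB_lift _ _).1 (conj yy yC).
Qed.

Lemma S3'_sphere_odd n x : S3' n.+1 x <->
  exists2 y, sphere_odd wA (4 ^+ n.+1) y & x = scaled_vec n.+1 y.
Proof.
rewrite /S3' -/classB scaled_vecP exprS.
split=> -[y [yy yC] ->]; exists y => //.
  by apply/(sphere_oddA_lift _ _).2; split=> //; apply/mem_classB.
by have [? /mem_classB] := (sphere_oddA_lift _ _).1 (conj yy yC).
Qed.

Theorem mainTheorem9 (n : nat) (hn : (1 <= n)%N) :
  has_card (S3 n) (3 * 2 ^ (2 * n + 1))%N /\ has_card (S3' n) (3 * 2 ^ (2 * n + 1))%N.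
Proof.
case: n hn => [//|n] _.
have -> : (3 * 2 ^ (2 * n.+1 + 1) = 6 * 4 ^ n.+1)%N.
  by rewrite expnD expnM expn1 mulnCA mulnC.
have [cardA cardB] := has_card_sphere_odd n.+1.
split.
  exact: has_card_image (@scaled_vec_inj n.+1) (@S3_sphere_odd n) cardB.
exact: has_card_image (@scaled_vec_inj n.+1) (@S3'_sphere_odd n) cardA.
Qed.
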